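(* Let $S^0$ be an adequate semigroup with semilattice of idempotents $E^0$, let $I$ be a left regular band having $E^0$ as a semilattice transversal, and suppose there is a left action $(x,e)\mapsto x\ast e$ of $S^0$ on $I$ (so $(xy)\ast e=x\ast(y\ast e)$) with $x\ast(ef)=(x\ast e)(x\ast f)$ for all $x\in S^0$, $e,f\in I$. Let $W=\{(e,x)\in I\times S^0: e\in L_{x^+}\}$ with multiplication $(e,x)(g,y)=(e(x\ast g),xy)$, and suppose that $x\ast y^+=(xy)^+$ for all $x,y\in S^0$. Then: 1. for all $x,y\in S^0$ and $f\in L_{y^+}$, $x\ast f\in L_{(xy)^+}$; 2. $E(W)=\{(e,x)\in W: x\in E^0\}$; 3. $E(W)$ is a band.
   Context: For a semigroup $T$, $E(T)$ is its set of idempotents. In an adequate semigroup (abundant, i.e. every $\mathcal{R}^\ast$- and $\mathcal{L}^\ast$-class contains an idempotent, with commuting idempotents) $x^+$ denotes the unique idempotent $\mathcal{R}^\ast$-related to $x$, where $a\,\mathcal{R}^\ast\,b$ iff $xa=ya\Leftrightarrow xb=yb$ for all $x,y\in T^1$. A left regular band satisfies $xyx=xy$; $E^0$ is a semilattice transversal of $I$ if $E^0$ is a subsemilattice of $I$ and each element of $I$ has exactly one inverse in $E^0$. For $x\in E^0$, $L_x$ is the $\mathcal{L}$-class of $x$ in $I$. *)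

Set Implicit Arguments.

Section Defs.

Definition associative_op {T : Type} (m : T -> T -> T) : Prop :=
  forall a b c, m a (m b c) = m (m a b) c.

Definition idem {T : Type} (m : T -> T -> T) (a : T) : Prop := m a a = a.

(* multiplication by an element of T^1 = option T (None is the adjoined identity) *)
Definition mul1l {T : Type} (m : T -> T -> T) (u : option T) (a : T) : T :=
  match u with None => a | Some x => m x a end.
Definition mul1r {T : Type} (m : T -> T -> T) (a : T) (u : option T) : T :=
  match u with None => a | Some x => m a x end.

Definition Rstar {T : Type} (m : T -> T -> T) (a b : T) : Prop :=
  forall x y : option T, mul1l m x a = mul1l m y a <-> mul1l m x b = mul1l m y b.
Definition Lstar {T : Type} (m : T -> T -> T) (a b : T) : Prop :=
  forall x y : option T, mul1r m a x = mul1r m a y <-> mul1r m b x = mul1r m b y.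

Definition adequate {T : Type} (m : T -> T -> T) : Prop :=
  associative_op m /\
  (forall a, exists e, idem m e /\ Rstar m a e) /\
  (forall a, exists e, idem m e /\ Lstar m a e) /\
  (forall e f, idem m e -> idem m f -> m e f = m f e).

Definition left_regular_band {T : Type} (m : T -> T -> T) : Prop :=
  associative_op m /\ (forall a, idem m a) /\ (forall a b, m (m a b) a = m a b).

Definition Lgreen {T : Type} (m : T -> T -> T) (a b : T) : Prop :=
  (exists u : option T, a = mul1l m u b) /\ (exists v : option T, b = mul1l m v a).

Definition inverse_of {T : Type} (m : T -> T -> T) (a b : T) : Prop :=
  m (m a b) a = a /\ m (m b a) b = b.

End Defs.


(* For x idempotent, x^+ = x, so (e, x) in W means e x = e and x e = x.  The endomorphism
   x * _ fixes x (x * x^+ = (xx)^+), hence x (x * e) = x and e (x * e) = e x (x * e) = e x = e: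
   (e, x) is idempotent.  For a product of two such pairs the second entry xy = yx is
   idempotent, and (xy)^+ = xy is y x in I; in a left regular band, e L g, k L h and h g = h
   give e k L h, which keeps e (x * f) in the L-class of (xy)^+. *)

Lemma Lgreen_mulE {T : Type} (m : T -> T -> T) :
  left_regular_band m ->
  forall a b, Lgreen m a b <-> m a b = a /\ m b a = b.
Proof.
  intros [massoc [midem _]] a b. split.
  - intros [[u Hu] [v Hv]]. split.
    + destruct u as [u|]; simpl in Hu; subst a;
        [rewrite <- massoc, midem; reflexivity | apply midem].
    + destruct v as [v|]; simpl in Hv; subst b;
        [rewrite <- massoc, midem; reflexivity | apply midem].
  - intros [Hab Hba]. split; [exists (Some a) | exists (Some b)]; simpl; congruence.
Qed.

Lemma Lgreen_morph {T U : Type} (m : T -> T -> T) (n : U -> U -> U) (phi : T -> U) :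
  (forall a b, phi (m a b) = n (phi a) (phi b)) ->
  forall a b, Lgreen m a b -> Lgreen n (phi a) (phi b).
Proof.
  intros phiM a b [[u Hu] [v Hv]].
  split; [exists (option_map phi u); rewrite Hu | exists (option_map phi v); rewrite Hv];
    [destruct u | destruct v]; simpl; auto.
Qed.

Lemma Rstar_idem_eq {T : Type} (m : T -> T -> T) :
  (forall e f, idem m e -> idem m f -> m e f = m f e) ->
  forall a e, idem m a -> idem m e -> Rstar m a e -> a = e.
Proof.
  intros mcomm a e Ha He HaR.
  assert (Hae : m a e = e) by exact (proj1 (HaR (Some a) None) Ha).
  assert (Hea : m e a = a) by exact (proj2 (HaR (Some e) None) He).
  transitivity (m e a); [exact (eq_sym Hea)|].
  rewrite mcomm by assumption. exact Hae.
Qed.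

Lemma idem_mul {T : Type} (m : T -> T -> T) :
  associative_op m -> (forall e f, idem m e -> idem m f -> m e f = m f e) ->
  forall e f, idem m e -> idem m f -> idem m (m e f).
Proof.
  intros massoc mcomm e f He Hf. unfold idem in *.
  rewrite <- massoc, (massoc f e f), <- (mcomm e f He Hf), <- massoc, Hf, massoc, He.
  reflexivity.
Qed.

Section LeftRegularBand.

Context {T : Type} {m : T -> T -> T}.
Hypothesis lrb : left_regular_band m.

Lemma Lgreen_mul_endo_fixed (phi : T -> T) {e g : T} :
  (forall a b, phi (m a b) = m (phi a) (phi b)) -> phi g = g ->
  Lgreen m e g -> m e (phi e) = e.
Proof.
  intros phiM Hg HeL. pose proof lrb as [massoc _].
  apply (Lgreen_mulE m lrb) in HeL as [Heg Hge].
  assert (Hgphi : m g (phi e) = g).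
  { transitivity (phi (m g e)); [rewrite phiM, Hg; reflexivity | rewrite Hge; exact Hg]. }
  transitivity (m (m e g) (phi e)); [rewrite Heg; reflexivity|].
  rewrite <- massoc, Hgphi. exact Heg.
Qed.

Lemma lrb_Lgreen_mull {e g k h : T} :
  Lgreen m e g -> Lgreen m k h -> m h g = h -> Lgreen m (m e k) h.
Proof.
  intros HeL HkL Hhg. pose proof lrb as [massoc _].
  apply (Lgreen_mulE m lrb) in HeL as [Heg Hge].
  apply (Lgreen_mulE m lrb) in HkL as [Hkh Hhk].
  assert (Hhe : m h e = h).
  { transitivity (m (m h g) e); [rewrite Hhg; reflexivity|].
    rewrite <- massoc, Hge. exact Hhg. }
  apply (Lgreen_mulE m lrb). split.
  - rewrite <- massoc, Hkh. reflexivity.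
  - rewrite massoc, Hhe. exact Hhk.
Qed.

End LeftRegularBand.

Section SemidirectW.

Variables (S I : Type) (mulS : S -> S -> S) (mulI : I -> I -> I)
  (plus : S -> S) (emb : S -> I) (act : S -> I -> I).
Hypotheses (HS : adequate mulS)
  (Hplus_idem : forall x, idem mulS (plus x))
  (Hplus_R : forall x, Rstar mulS x (plus x))
  (HI : left_regular_band mulI)
  (Hemb_mul : forall e f, idem mulS e -> idem mulS f ->
                emb (mulS e f) = mulI (emb e) (emb f))
  (Hact_hom : forall x e f, act x (mulI e f) = mulI (act x e) (act x f))
  (Hplus_act : forall x y, act x (emb (plus y)) = emb (plus (mulS x y))).

Definition inW (w : I * S) : Prop := Lgreen mulI (fst w) (emb (plus (snd w))).

Definition mulW (w v : I * S) : I * S :=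
  (mulI (fst w) (act (snd w) (fst v)), mulS (snd w) (snd v)).

Definition idemW (w : I * S) : Prop := inW w /\ mulW w w = w.

Lemma plus_idem {x : S} : idem mulS x -> plus x = x.
Proof.
  intros Hx. pose proof HS as [_ [_ [_ Scomm]]].
  apply eq_sym, (Rstar_idem_eq mulS Scomm); auto.
Qed.

Lemma act_emb_idem {x : S} : idem mulS x -> act x (emb x) = emb x.
Proof.
  intros Hx. pose proof (Hplus_act x x) as Hxx.
  rewrite Hx, (plus_idem Hx) in Hxx. exact Hxx.
Qed.

Lemma act_Lgreen_plus x y f :
  Lgreen mulI f (emb (plus y)) -> Lgreen mulI (act x f) (emb (plus (mulS x y))).
Proof.
  intros Hf. rewrite <- Hplus_act. exact (Lgreen_morph _ _ (act x) (Hact_hom x) _ _ Hf).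
Qed.

Lemma idemW_iff w : idemW w <-> inW w /\ idem mulS (snd w).
Proof.
  destruct w as [e x]. unfold idemW, inW, mulW, idem; simpl.
  split; intros [He Hx]; split; auto.
  - injection Hx; auto.
  - rewrite (plus_idem Hx) in He.
    rewrite Hx, (Lgreen_mul_endo_fixed HI (act x) (Hact_hom x) (act_emb_idem Hx) He).
    reflexivity.
Qed.

Lemma idemW_mul w v : idemW w -> idemW v -> idemW (mulW w v).
Proof.
  intros Hw Hv. apply idemW_iff in Hw, Hv. apply idemW_iff.
  destruct w as [e x], v as [f y], Hw as [He Hx], Hv as [Hf Hy].
  unfold inW, mulW in *; simpl in *. pose proof HS as [Sassoc [_ [_ Scomm]]].
  assert (Hxy : idem mulS (mulS x y)) by exact (idem_mul mulS Sassoc Scomm x y Hx Hy).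
  split; [|exact Hxy].
  pose proof (act_Lgreen_plus x y f Hf) as Hk.
  rewrite (plus_idem Hx) in He. rewrite (plus_idem Hxy) in Hk |- *.
  apply (lrb_Lgreen_mull HI He Hk).
  rewrite (Scomm x y), !Hemb_mul by assumption.
  pose proof HI as [Iassoc [Iidem _]]. rewrite <- Iassoc, (Iidem (emb x)). reflexivity.
Qed.

End SemidirectW.

Theorem lemma3p1
  (S I : Type) (mulS : S -> S -> S) (mulI : I -> I -> I)
  (plus : S -> S)            (* x |-> x^+ *)
  (emb : S -> I)             (* identification of E^0 = E(S^0) with a subset of I *)
  (act : S -> I -> I)        (* (x, e) |-> x * e *)
  (* S^0 is adequate; x^+ is the idempotent R*-related to x *)
  (HS : adequate mulS)
  (Hplus_idem : forall x, idem mulS (plus x))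
  (Hplus_R : forall x, Rstar mulS x (plus x))
  (* I is a left regular band *)
  (HI : left_regular_band mulI)
  (* E^0 is a subsemilattice of I: emb is injective and multiplicative on E^0 *)
  (Hemb_inj : forall e f, idem mulS e -> idem mulS f -> emb e = emb f -> e = f)
  (Hemb_mul : forall e f, idem mulS e -> idem mulS f ->
                emb (mulS e f) = mulI (emb e) (emb f))
  (* E^0 is a semilattice transversal: each element of I has exactly one inverse in E^0 *)
  (Htrans_ex : forall a : I, exists e, idem mulS e /\ inverse_of mulI a (emb e))
  (Htrans_uniq : forall (a : I) e f, idem mulS e -> idem mulS f ->
                   inverse_of mulI a (emb e) -> inverse_of mulI a (emb f) -> e = f)
  (* left action of S^0 on I by endomorphisms *)
  (Hact_assoc : forall x y e, act (mulS x y) e = act x (act y e))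
  (Hact_hom : forall x e f, act x (mulI e f) = mulI (act x e) (act x f))
  (* x * y^+ = (xy)^+ *)
  (Hplus_act : forall x y, act x (emb (plus y)) = emb (plus (mulS x y))) :
  let inW := fun (w : I * S) => Lgreen mulI (fst w) (emb (plus (snd w))) in
  let mulW := fun (w v : I * S) =>
      (mulI (fst w) (act (snd w) (fst v)), mulS (snd w) (snd v)) in
  let EW := fun (w : I * S) => inW w /\ mulW w w = w in
  (* 1 *)
  (forall x y f, Lgreen mulI f (emb (plus y)) ->
     Lgreen mulI (act x f) (emb (plus (mulS x y)))) /\
  (* 2: E(W) = {(e,x) in W : x in E^0} *)
  (forall w : I * S, EW w <-> (inW w /\ idem mulS (snd w))) /\
  (* 3: E(W) is a band (closed under the product of W; its elements are idempotent) *)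
  (forall w v, EW w -> EW v -> EW (mulW w v)).
Proof.
  intros. split; [|split].
  - apply act_Lgreen_plus; assumption.
  - apply idemW_iff; assumption.
  - apply idemW_mul; assumption.
Qed.
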